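(* Let $u$ be a symmetric solution of $i u_t + u_{xx} + |u|^4u=0$ with $\|u_0\|_{L^2}=\|Q\|_{L^2}$, on its maximal interval of existence $I$. Then the function $$d(t) = \inf_{\lambda>0,\gamma\in\mathbb{R}} \|e^{i\gamma}\lambda^{1/2}u(t,\lambda x) - Q(x)\|_{L^2(\mathbb{R})}$$ is upper semicontinuous on $I$. Moreover, there exists $\delta>0$ such that $d$ is continuous at every $t\in I$ with $d(t)<\delta$.
   Context: $Q(x) = (3/\cosh^2(2x))^{1/4}$. Solutions are strong $L^2$ solutions (in $C_tL^2_x\cap L^4_{t,loc}L^\infty_x$). *)

From HB Require Import structures.
From mathcomp Require Import all_boot all_order all_algebra.
From mathcomp Require Import all_classical all_reals all_analysis.
From mathcomp Require Import ess_sup_inf.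
Set Implicit Arguments. Unset Strict Implicit. Unset Printing Implicit Defensive.
Import Order.TTheory GRing.Theory Num.Def Num.Theory.
Import numFieldNormedType.Exports.
Local Open Scope classical_set_scope.
Local Open Scope ring_scope.

(* Complex numbers are encoded as pairs (real part, imaginary part) of reals.
   A space-time function u(t,x) is  u : R -> R -> R * R. *)

Section NLS.
Variable R : realType.
Notation mu := (@lebesgue_measure R).

Definition cabs2 (z : R * R) : R := z.1 ^+ 2 + z.2 ^+ 2.

Definition L2sq (f : R -> R * R) : \bar R :=
  (\int[mu]_x (cabs2 (f x))%:E)%E.

(* ||f||_{L^2} (meaningful when f is in L^2) *)
Definition L2norm (f : R -> R * R) : R := Num.sqrt (fine (L2sq f)).

Definition in_L2 (f : R -> R * R) : Prop :=
  measurable_fun setT (fun x => (f x).1) /\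
  measurable_fun setT (fun x => (f x).2) /\ (L2sq f < +oo)%E.

Definition Linf (f : R -> R * R) : \bar R :=
  ess_sup mu (fun x => (Num.sqrt (cabs2 (f x)))%:E).

Definition cosh (y : R) : R := (expR y + expR (- y)) / 2.

Definition Q (x : R) : R * R := (powR (3 / (cosh (2 * x)) ^+ 2) (4^-1), 0).

Definition dt (f : R -> R -> R) : R -> R -> R :=
  fun t x => derive1 (fun s => f s x) t.
Definition dx (f : R -> R -> R) : R -> R -> R :=
  fun t x => derive1 (fun y => f t y) x.

Fixpoint pder (w : seq bool) (f : R -> R -> R) : R -> R -> R :=
  match w with
  | [::] => f
  | b :: w' => if b then dt (pder w' f) else dx (pder w' f)
  end.

Definition smooth2 (f : R -> R -> R) : Prop :=
  forall (w : seq bool) (t x : R),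
    derivable (fun s => pder w f s x) t 1 /\
    derivable (fun y => pder w f t y) x 1 /\
    {for (t, x), continuous (fun z : R * R => pder w f z.1 z.2)}.

Definition test_fun (a b : \bar R) (phi : R -> R -> R) : Prop :=
  smooth2 phi /\
  exists c d M : R, [/\ (a < c%:E)%E, (d%:E < b)%E &
    forall t x, (t < c \/ d < t \/ M < `|x|) -> phi t x = 0].

Definition in_I (a b : \bar R) (t : R) : Prop := (a < t%:E)%E /\ (t%:E < b)%E.

(* Strong L^2 solution of  i u_t + u_xx + |u|^4 u = 0  on the open
   interval (a,b), in the class C_t L^2_x cap L^4_{t,loc} L^infty_x,
   with the equation holding in the sense of distributions on (a,b) x R.
   Writing u = v + i w, the equation splits into
     -w_t + v_xx + |u|^4 v = 0   and   v_t + w_xx + |u|^4 w = 0. *)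
Definition nls_solution (u : R -> R -> R * R) (a b : \bar R) : Prop :=
  (a < b)%E /\ [/\
      measurable_fun setT (fun z : R * R => (u z.1 z.2).1) /\
      measurable_fun setT (fun z : R * R => (u z.1 z.2).2),
      (forall t, in_I a b t -> in_L2 (u t)),
      (forall t, in_I a b t -> forall eps : R, 0 < eps ->
         exists eta : R, 0 < eta /\ forall s, in_I a b s -> `|s - t| < eta ->
           L2norm (fun x => ((u s x).1 - (u t x).1, (u s x).2 - (u t x).2)) < eps),
      (forall c d : R, (a < c%:E)%E -> (d%:E < b)%E ->
         (\int[mu]_(t in `[c, d]) ((Linf (u t)) ^+ 4) < +oo)%E) &
      (forall phi, test_fun a b phi ->
         (\int[mu]_t \int[mu]_x
            ((u t x).2 * dt phi t x + (u t x).1 * dx (dx phi) t x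
             + (cabs2 (u t x)) ^+ 2 * (u t x).1 * phi t x)%:E = 0)%E /\
         (\int[mu]_t \int[mu]_x
            (- (u t x).1 * dt phi t x + (u t x).2 * dx (dx phi) t x
             + (cabs2 (u t x)) ^+ 2 * (u t x).2 * phi t x)%:E = 0)%E)].

Definition maximal_solution (u : R -> R -> R * R) (a b : \bar R) : Prop :=
  [/\ in_I a b 0, nls_solution u a b &
      forall (a' b' : \bar R) (v : R -> R -> R * R),
        (a' <= a)%E -> (b <= b')%E -> nls_solution v a' b' ->
        (forall t x, in_I a b t -> v t x = u t x) -> a' = a /\ b' = b].

Definition symmetric_sol (u : R -> R -> R * R) (a b : \bar R) : Prop :=
  forall t x, in_I a b t -> u t (- x) = u t x.

Definition modulated (u : R -> R -> R * R) (t lam gam : R) : R -> R * R :=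
  fun x =>
    let z := u t (lam * x) in
    (Num.sqrt lam * (cos gam * z.1 - sin gam * z.2) - (Q x).1,
     Num.sqrt lam * (sin gam * z.1 + cos gam * z.2) - (Q x).2).

Definition dist_Q (u : R -> R -> R * R) (t : R) : R :=
  inf [set L2norm (modulated u t p.1 p.2) | p in [set p : R * R | 0 < p.1]].
End NLS.

From HB Require Import structures.
From mathcomp Require Import all_boot all_order all_algebra.
From mathcomp Require Import all_classical all_reals all_analysis.
From mathcomp Require Import measurable_realfun ring lra.
Import Order.TTheory GRing.Theory Num.Def Num.Theory.
Import numFieldNormedType.Exports.
Local Open Scope classical_set_scope.
Local Open Scope ring_scope.
Set Implicit Arguments. Unset Strict Implicit. Unset Printing Implicit Defensive.

(* The maps f |-> e^{i gam} lam^{1/2} f(lam .) are isometries of L^2, so d(t)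
   is the L^2 distance from u(t) to the orbit of Q under a group of isometries
   and is therefore 1-Lipschitz: d(s) <= ||u(s) - u(t)|| + d(t).  Since
   t |-> u(t) is continuous into L^2, d is continuous on all of I, which gives
   both claims (with any delta). *)

Section dilation.
Variables (R : realType) (lam : R).
Notation mu := (@lebesgue_measure R).
Local Open Scope ereal_scope.

(* The library's measure structure on [pushforward] depends on a measurability
   proof that inference cannot find; [exact:] picks up [mlam] below. *)
Definition dilation_measure : set (measurableTypeR R) -> \bar R :=
  pushforward mu ( *%R lam : measurableTypeR R -> measurableTypeR R).

Let mlam : measurable_fun setT ( *%R lam : measurableTypeR R -> measurableTypeR R).
Proof. exact: measurable_funM. Qed.

Let dilation0 : dilation_measure set0 = 0.
Proof. exact: (@measure0 _ _ _ (pushforward mu ( *%R lam))). Qed.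

Let dilation_ge0 A : 0 <= dilation_measure A.
Proof. exact: (@measure_ge0 _ _ _ (pushforward mu ( *%R lam))). Qed.

Let dilation_sigma_additive : semi_sigma_additive dilation_measure.
Proof. exact: (@measure_semi_sigma_additive _ _ _ (pushforward mu ( *%R lam))). Qed.

HB.instance Definition _ := isMeasure.Build _ _ _ dilation_measure
  dilation0 dilation_ge0 dilation_sigma_additive.

Lemma lebesgue_measure_dilation (lam_gt0 : (0 < lam)%R) A :
  measurable A -> mu A = mscale (NngNum (ltW lam_gt0)) dilation_measure A.
Proof.
move=> mA.
apply: (@lebesgue_measure_unique R (mscale (NngNum (ltW lam_gt0)) dilation_measure)) => //.
move=> _ [[a b] _ <-] /=; rewrite /mscale /=.
have -> : dilation_measure `]a, b] = mu `](a / lam)%R, (b / lam)%R].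
  congr (mu _); apply/seteqP; split => x /=;
    by rewrite !in_itv /= ltr_pdivrMr // ler_pdivlMr // ![(_ * lam)%R]mulrC.
rewrite !lebesgue_measure_itv /= !lte_fin ltr_pM2r ?invr_gt0 //.
case: ifPn => _; last by rewrite mule0.
by rewrite -EFinD -EFinM -mulrBl mulrCA divff ?mulr1 // gt_eqF.
Qed.

Lemma ge0_integral_dilation (g : R -> R) : (0 < lam)%R ->
  measurable_fun setT g -> (forall x, 0 <= g x)%R ->
  \int[mu]_x (lam * g (lam * x))%:E = \int[mu]_x (g x)%:E.
Proof.
move=> lam_gt0 mg g_ge0.
have mEg : measurable_fun setT (EFin \o g) by exact/measurable_EFinP.
rewrite [RHS](eq_measure_integral (mscale (NngNum (ltW lam_gt0)) dilation_measure));
  last by move=> A mA _; exact: lebesgue_measure_dilation.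
rewrite ge0_integral_mscale //=; last by move=> x _; rewrite lee_fin.
rewrite /dilation_measure (ge0_integral_pushforward mlam) //=;
  last by move=> y _; rewrite lee_fin.
rewrite preimage_setT; under eq_integral do rewrite EFinM.
rewrite ge0_integralZl ?lee_fin ?ltW //.
- exact/measurable_EFinP/measurableT_comp.
- by move=> x _; rewrite lee_fin.
Qed.
End dilation.

Lemma le_add_of_weighted_sqr (R : realFieldType) (x a b : R) :
  0 <= x -> 0 <= a -> 0 <= b ->
  (forall c, 0 < c -> x ^+ 2 <= (1 + c) * a ^+ 2 + (1 + c^-1) * b ^+ 2) ->
  x <= a + b.
Proof.
move=> x_ge0 a_ge0 b_ge0 hx; apply/ler_addgt0Pr => e e_gt0.
set a' := a + e / 2; set b' := b + e / 2.
have e2_gt0 : 0 < e / 2 by rewrite divr_gt0.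
have a'_gt0 : 0 < a' by rewrite ltr_wpDl.
have b'_gt0 : 0 < b' by rewrite ltr_wpDl.
have sqr_le y e' : 0 <= y -> 0 <= e' -> y ^+ 2 <= (y + e') ^+ 2.
  by move=> y_ge0 e'_ge0; rewrite ler_sqr ?nnegrE ?addr_ge0 // lerDl.
(* The weight c = b'/a' turns the bound into exactly (a' + b')^2. *)
have opt : (1 + b' / a') * a' ^+ 2 + (1 + (b' / a')^-1) * b' ^+ 2 = (a' + b') ^+ 2.
  by field; rewrite !gt_eqF.
have /hx x2_le := divr_gt0 b'_gt0 a'_gt0.
have -> : a + b + e = a' + b' by rewrite /a' /b'; field.
have ab'_ge0 : 0 <= a' + b' by rewrite addr_ge0 // ltW.
rewrite -ler_sqr ?nnegrE // -opt (le_trans x2_le) //.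
by apply: lerD; apply: ler_wpM2l;
  rewrite ?sqr_le ?addr_ge0 ?invr_ge0 ?divr_ge0 // ltW.
Qed.

Section L2_pairs.
Variable R : realType.
Implicit Types (f g : R -> R * R) (z w : R * R).

Definition cmeasurable f : Prop :=
  measurable_fun setT (fun x => (f x).1) /\ measurable_fun setT (fun x => (f x).2).

Definition rescale (lam gam : R) f : R -> R * R := fun x =>
  let z := f (lam * x) in
  (Num.sqrt lam * (cos gam * z.1 - sin gam * z.2),
   Num.sqrt lam * (sin gam * z.1 + cos gam * z.2)).

Lemma cabs2_ge0 z : 0 <= cabs2 z.
Proof. by rewrite addr_ge0 // sqr_ge0. Qed.

Lemma cabs2D_le z w c : 0 < c ->
  cabs2 (z + w) <= (1 + c) * cabs2 z + (1 + c^-1) * cabs2 w.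
Proof.
move=> c_gt0; rewrite -subr_ge0.
have -> : (1 + c) * cabs2 z + (1 + c^-1) * cabs2 w - cabs2 (z + w) =
    c^-1 * ((c * z.1 - w.1) ^+ 2 + (c * z.2 - w.2) ^+ 2).
  by rewrite /cabs2 /=; field; rewrite gt_eqF.
by apply: mulr_ge0; [rewrite invr_ge0 ltW | rewrite addr_ge0 // sqr_ge0].
Qed.

Lemma measurable_cabs2 f : cmeasurable f -> measurable_fun setT (fun x => cabs2 (f x)).
Proof. by case=> m1 m2; apply: measurable_funD; exact: measurable_funX. Qed.

Lemma cmeasurableD f g : cmeasurable f -> cmeasurable g -> cmeasurable (f \+ g).
Proof. by case=> ? ? [? ?]; split; exact: measurable_funD. Qed.

Lemma cmeasurableN f : cmeasurable f -> cmeasurable (\- f).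
Proof. by case=> m1 m2; split; exact: measurable_funN. Qed.

Lemma cmeasurable_rescale lam gam f : cmeasurable f -> cmeasurable (rescale lam gam f).
Proof.
case=> m1 m2; have mlam : measurable_fun setT ( *%R lam) by exact: measurable_funM.
have m1' := measurableT_comp m1 mlam; have m2' := measurableT_comp m2 mlam.
by split; apply: measurable_funM => //;
  [apply: measurable_funB | apply: measurable_funD]; exact: measurable_funM.
Qed.

Lemma L2sq_ge0 f : (0 <= L2sq f)%E.
Proof. by apply: integral_ge0 => x _; rewrite lee_fin cabs2_ge0. Qed.

Lemma L2normN f : L2norm (\- f) = L2norm f.
Proof. by rewrite /L2norm /L2sq; under eq_integral do rewrite /cabs2 /= !sqrrN. Qed.

Lemma L2sq_rescale lam gam f : 0 < lam -> cmeasurable f ->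
  L2sq (rescale lam gam f) = L2sq f.
Proof.
move=> lam_gt0 mf; rewrite /L2sq -(ge0_integral_dilation lam_gt0 (measurable_cabs2 mf)) //.
  apply: eq_integral => x _; congr EFin; rewrite /cabs2 /= !exprMn sqr_sqrtr ?ltW //.
  rewrite -mulrDr; congr (_ * _); rewrite -[RHS]mul1r -(cos2Dsin2 gam); ring.
by move=> x; exact: cabs2_ge0.
Qed.

Lemma L2norm_rescale lam gam f : 0 < lam -> cmeasurable f ->
  L2norm (rescale lam gam f) = L2norm f.
Proof. by move=> lam_gt0 mf; rewrite /L2norm L2sq_rescale. Qed.

Lemma L2sqE f : in_L2 f -> L2sq f = (L2norm f ^+ 2)%:E.
Proof.
by case=> _ [_ f_fin]; rewrite sqr_sqrtr ?fine_ge0 ?L2sq_ge0 // fineK // ge0_fin_numE // L2sq_ge0.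
Qed.

Lemma in_L2N f : in_L2 f -> in_L2 (\- f).
Proof.
case=> m1 [m2 f_fin]; have [m1' m2'] := cmeasurableN (conj m1 m2).
by split; [|split] => //; rewrite /L2sq; under eq_integral do rewrite /cabs2 /= !sqrrN.
Qed.

Lemma in_L2_rescale lam gam f : 0 < lam -> in_L2 f -> in_L2 (rescale lam gam f).
Proof.
move=> lam_gt0 [m1 [m2 f_fin]]; have [m1' m2'] := cmeasurable_rescale lam gam (conj m1 m2).
by split; [|split] => //; rewrite L2sq_rescale.
Qed.

Lemma L2sqD_le f g c : in_L2 f -> in_L2 g -> 0 < c ->
  (L2sq (f \+ g)%R <= ((1 + c) * L2norm f ^+ 2 + (1 + c^-1) * L2norm g ^+ 2)%:E)%E.
Proof.
move=> f2 g2 c_gt0.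
have [mf mg] : cmeasurable f /\ cmeasurable g by case: f2 => ? []; case: g2 => ? [].
have mEf := (measurable_EFinP _ _).2 (measurable_cabs2 mf).
have mEg := (measurable_EFinP _ _).2 (measurable_cabs2 mg).
have c1_ge0 : 0 <= 1 + c by rewrite addr_ge0 // ltW.
have c2_ge0 : 0 <= 1 + c^-1 by rewrite addr_ge0 // invr_ge0 ltW.
have cabs2E_ge0 (h : R -> R * R) x : (0 <= (cabs2 (h x))%:E)%E by rewrite lee_fin cabs2_ge0.
rewrite EFinD (EFinM (1 + c)) (EFinM (1 + c^-1)) -L2sqE // -L2sqE // /L2sq.
rewrite -!ge0_integralZl_EFin // -ge0_integralD //; first last.
- by apply: emeasurable_funM => //; exact: measurable_cst.
- by move=> x _; rewrite -EFinM lee_fin mulr_ge0 ?cabs2_ge0.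
- by apply: emeasurable_funM => //; exact: measurable_cst.
- by move=> x _; rewrite -EFinM lee_fin mulr_ge0 ?cabs2_ge0.
apply: ge0_le_integral => //.
- by apply/measurable_EFinP; apply: measurable_cabs2; exact: cmeasurableD.
- by apply: emeasurable_funD; apply: emeasurable_funM => //; exact: measurable_cst.
- by move=> x _; rewrite -!EFinM -EFinD lee_fin cabs2D_le.
Qed.

Lemma in_L2D f g : in_L2 f -> in_L2 g -> in_L2 (f \+ g).
Proof.
move=> f2 g2; have [[mf1 [mf2 _]] [mg1 [mg2 _]]] := (f2, g2).
have [m1 m2] := cmeasurableD (conj mf1 mf2) (conj mg1 mg2).
by split; [|split] => //; exact: le_lt_trans (L2sqD_le f2 g2 ltr01) (ltry _).
Qed.

Lemma L2norm_triangle f g : in_L2 f -> in_L2 g ->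
  L2norm (f \+ g) <= L2norm f + L2norm g.
Proof.
move=> f2 g2; apply: le_add_of_weighted_sqr; rewrite ?sqrtr_ge0 // => c c_gt0.
by rewrite -lee_fin -L2sqE ?(L2sqD_le f2 g2 c_gt0) //; exact: in_L2D.
Qed.

Lemma L2distC f g : L2norm (f \- g) = L2norm (g \- f).
Proof. by rewrite -L2normN; congr L2norm; apply/funext => x /=; rewrite opprB. Qed.

(* Junk value: [L2norm] reads the infinite integral through [fine +oo = 0]. *)
Lemma L2norm_notin_L2 f : cmeasurable f -> ~ in_L2 f -> L2norm f = 0.
Proof.
case=> m1 m2 not_f2; have : ~~ (L2sq f < +oo)%E by apply/negP => ?; exact: not_f2.
by rewrite ltey negbK /L2norm => /eqP ->; rewrite sqrtr0.
Qed.
End L2_pairs.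

Section Q_measurable.
Variable R : realType.

Lemma cosh_gt0 (y : R) : 0 < cosh y.
Proof. by rewrite /cosh divr_gt0 // addr_gt0 // expR_gt0. Qed.

Lemma continuous_cosh : continuous (@cosh R).
Proof.
move=> x; apply: cvgM; last exact: cvg_cst.
apply: cvgD; first exact: continuous_expR.
by apply: continuous_comp; [exact: opp_continuous | exact: continuous_expR].
Qed.

Lemma measurable_Q : measurable_fun setT (fun x => (@Q R x).1).
Proof.
apply: measurableT_comp (measurable_powR _) _; apply: continuous_measurable_fun => x.
have cosh2x : {for x, continuous (fun y : R => cosh (2 * y))}.
  by apply: continuous_comp; [exact: mulrl_continuous | exact: continuous_cosh].
apply: cvgM; first exact: cvg_cst.
by apply: cvgV; [rewrite expf_neq0 // gt_eqF // cosh_gt0 | exact: (cvgM cosh2x cosh2x)].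
Qed.

Lemma cmeasurable_Q : cmeasurable (@Q R).
Proof. by split; [exact: measurable_Q | exact: measurable_cst]. Qed.
End Q_measurable.

Section distance_to_Q.
Variables (R : realType) (u : R -> R -> R * R).

Lemma modulatedE t lam gam : modulated u t lam gam = rescale lam gam (u t) \- @Q R.
Proof. by []. Qed.

Lemma modulated_shift s t lam gam :
  modulated u s lam gam = rescale lam gam (u s \- u t) \+ modulated u t lam gam.
Proof.
apply/funext => x.
by apply: injective_projections; rewrite /= /modulated /rescale /=; ring.
Qed.

Lemma dist_Q_ge0 t : 0 <= dist_Q u t.
Proof.
apply: lb_le_inf => [|_ [p _ <-]]; last exact: sqrtr_ge0.
by exists (L2norm (modulated u t 1 0)), (1, 0) => //=.
Qed.

Lemma dist_Q_le t lam gam : 0 < lam -> dist_Q u t <= L2norm (modulated u t lam gam).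
Proof.
move=> lam_gt0; apply: ge_inf; last by exists (lam, gam).
by exists 0 => _ [p _ <-]; exact: sqrtr_ge0.
Qed.

Lemma dist_Q_eq0 t : ~ in_L2 (@Q R) -> in_L2 (u t) -> dist_Q u t = 0.
Proof.
move=> not_Q2 ut2; apply/le_anti; rewrite dist_Q_ge0 andbT.
rewrite (le_trans (dist_Q_le t 0 ltr01)) // L2norm_notin_L2 //.
  have [m1 m2] : cmeasurable (u t) by case: ut2 => ? [].
  by rewrite modulatedE; apply/cmeasurableD/cmeasurableN/cmeasurable_Q/cmeasurable_rescale.
move=> mod2; apply: not_Q2.
have -> : @Q R = rescale 1 0 (u t) \+ \- modulated u t 1 0.
  by apply/funext => x; rewrite modulatedE /= opprB addrC subrK.
by apply/in_L2D/in_L2N => //; exact: in_L2_rescale.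
Qed.

Lemma dist_Q_le_add s t : in_L2 (u s) -> in_L2 (u t) ->
  dist_Q u s <= L2norm (u s \- u t) + dist_Q u t.
Proof.
(* Avoids computing the integral of Q^2: were Q not in L^2, d would vanish. *)
move=> us2 ut2; have [Q2|not_Q2] := pselect (in_L2 (@Q R)); last first.
  by rewrite !dist_Q_eq0 // addr0 sqrtr_ge0.
have ust2 : in_L2 (u s \- u t) by apply/in_L2D/in_L2N.
rewrite addrC -lerBlDr; apply: lb_le_inf => [|_ [[lam gam] /= lam_gt0 <-]].
  by exists (L2norm (modulated u t 1 0)), (1, 0) => //=.
rewrite lerBlDr (le_trans (dist_Q_le s gam lam_gt0)) // (modulated_shift s t) addrC.
have mst : cmeasurable (u s \- u t) by case: ust2 => ? [].
rewrite -(L2norm_rescale gam lam_gt0 mst).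
apply: L2norm_triangle; first exact: in_L2_rescale.
by rewrite modulatedE; apply/in_L2D/in_L2N => //; exact: in_L2_rescale.
Qed.

Lemma dist_Q_continuous a b : nls_solution u a b ->
  forall t, in_I a b t -> forall eps : R, 0 < eps ->
    exists eta : R, 0 < eta /\ forall s, in_I a b s -> `|s - t| < eta ->
      `|dist_Q u s - dist_Q u t| < eps.
Proof.
move=> [_ [_ u_L2 u_cont _ _]] t It e e_gt0.
have [eta [eta_gt0 near_t]] := u_cont t It e e_gt0.
exists eta; split => // s Is st.
have dist_st : L2norm (u s \- u t) < e := near_t s Is st.
have le_st := dist_Q_le_add (u_L2 s Is) (u_L2 t It).
have le_ts := dist_Q_le_add (u_L2 t It) (u_L2 s Is).
rewrite L2distC in le_ts; rewrite ltr_norml; apply/andP; split; lra.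
Qed.
End distance_to_Q.

Theorem theorem2p4 (R : realType) (u : R -> R -> R * R) (a b : \bar R) :
  maximal_solution u a b ->
  symmetric_sol u a b ->
  L2norm (u 0) = L2norm (@Q R) ->
  (* d is upper semicontinuous on I = (a,b) *)
  (forall t, in_I a b t -> forall eps : R, 0 < eps ->
     exists eta : R, 0 < eta /\
       forall s, in_I a b s -> `|s - t| < eta -> dist_Q u s < dist_Q u t + eps) /\
  (* d is continuous at every t in I with d(t) < delta *)
  (exists delta : R, 0 < delta /\
     forall t, in_I a b t -> dist_Q u t < delta ->
       forall eps : R, 0 < eps ->
         exists eta : R, 0 < eta /\
           forall s, in_I a b s -> `|s - t| < eta ->
             `|dist_Q u s - dist_Q u t| < eps).
Proof.
move=> [_ u_sol _] _ _; have d_cont := dist_Q_continuous u_sol.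
split; last by exists 1; split => // t It _; exact: d_cont.
move=> t It e e_gt0; have [eta [eta_gt0 near_t]] := d_cont t It e e_gt0.
exists eta; split => // s Is st.
by have := near_t s Is st; rewrite ltr_norml => /andP[_]; rewrite ltrBlDr addrC.
Qed.
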